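(* (i) Let $(\Phi_1,\Phi_2,\Phi_3,\Phi_{123})$ and $(\Phi_{23},\Phi_{13},\Phi_{12},\Phi)$ be the vertices of two reciprocal $(4,6)$ configurations, and let the complex dilations $a,b,c,a_1,b_2,c_3\in\mathbb{C}$ be defined by $$\Phi_{12}-\Phi=c(\Phi_1-\Phi_2),\quad \Phi_{23}-\Phi=a(\Phi_2-\Phi_3),\quad \Phi_{13}-\Phi=b(\Phi_3-\Phi_1),$$ $$\Phi_{123}-\Phi_3=c_3(\Phi_{13}-\Phi_{23}),\quad \Phi_{123}-\Phi_1=a_1(\Phi_{12}-\Phi_{13}),\quad \Phi_{123}-\Phi_2=b_2(\Phi_{23}-\Phi_{12}).$$ Then $a_1=-\frac{a}{ab+bc+ca}$, $b_2=-\frac{b}{ab+bc+ca}$, $c_3=-\frac{c}{ab+bc+ca}$. (ii) Conversely, let $\Phi_1,\Phi_2,\Phi_3,\Phi$ be four generic points of $\mathbb{C}$, let $a,b,c\in\mathbb{C}$ be arbitrary non-vanishing complex numbers and let $a_1,b_2,c_3$ be given by these formulas. Then the six linear equations above, in the unknowns $\Phi_{12},\Phi_{23},\Phi_{13},\Phi_{123}$, are compatible and their unique solution gives reciprocal $(4,6)$ configurations with vertices $\Phi_1,\Phi_2,\Phi_3,\Phi_{123}$ and $\Phi_{23},\Phi_{13},\Phi_{12},\Phi$ respectively.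
   Context: The plane is identified with $\mathbb{C}$. A $(4,6)$ configuration consists of four points, each pair joined by a circular arc (generalized circles allowed), such that the circular extensions of all six arcs pass through one common point $\Phi_*$ (possibly $\infty$). Arcs correspond as: $\{\Phi_1,\Phi_2\}\leftrightarrow\{\Phi,\Phi_{12}\}$, $\{\Phi_2,\Phi_3\}\leftrightarrow\{\Phi,\Phi_{23}\}$, $\{\Phi_3,\Phi_1\}\leftrightarrow\{\Phi,\Phi_{13}\}$, $\{\Phi_1,\Phi_{123}\}\leftrightarrow\{\Phi_{13},\Phi_{12}\}$, $\{\Phi_2,\Phi_{123}\}\leftrightarrow\{\Phi_{12},\Phi_{23}\}$, $\{\Phi_3,\Phi_{123}\}\leftrightarrow\{\Phi_{23},\Phi_{13}\}$. Two $(4,6)$ configurations (common points $\Phi_*$, $\Phi_*'$) are reciprocally related if the six angles made by the arcs of one equal those made by the corresponding arcs of the other; equivalently, if there are Möbius transformations sending $\Phi_*,\Phi_*'$ to $\infty$ such that the two resulting straight-line figures, after rotating one of them, have all corresponding segments parallel (i.e. form reciprocal triangles). *)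

(* The plane is C := R[i] = complex R over an arbitrary
   real closed field R (covers R = the reals, i.e. C = the complex numbers). *)
From HB Require Import structures.
From mathcomp Require Import all_boot all_order all_algebra.
From mathcomp Require Import complex.
From mathcomp Require Import mpoly.
Set Implicit Arguments.
Unset Strict Implicit.
Unset Printing Implicit Defensive.
Import Order.TTheory GRing.Theory Num.Theory.
Local Open Scope ring_scope.

(* Points of the Riemann sphere: [Some z] is a finite point, [None] is oo. *)
Definition sphere (R : rcfType) := option R[i].

Record mobius (R : rcfType) := Mobius {
  mob_a : R[i]; mob_b : R[i]; mob_c : R[i]; mob_d : R[i] }.

Definition mobius_ok (R : rcfType) (M : mobius R) :=
  mob_a M * mob_d M - mob_b M * mob_c M != 0.

Definition mob_app (R : rcfType) (M : mobius R) (z : sphere R) : sphere R :=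
  match z with
  | Some w => if mob_c M * w + mob_d M == 0 then None
              else Some ((mob_a M * w + mob_b M) / (mob_c M * w + mob_d M))
  | None => if mob_c M == 0 then None else Some (mob_a M / mob_c M)
  end.

(* finite image of a finite point (junk value 0 if it is sent to oo) *)
Definition mob_fin (R : rcfType) (M : mobius R) (z : R[i]) : R[i] :=
  odflt 0 (mob_app M (Some z)).

Definition parallel (R : rcfType) (x y : R[i]) : Prop :=
  complex.Im (x * conjc y) = 0.

(* A (4,6) configuration with vertices P1 P2 P3 P4 and common point Ps of the
   circular extensions of its six arcs.  For three distinct points of the
   sphere there is exactly one generalized circle through them, so the six
   circles through the pairs of vertices and Ps always exist; the
   configuration is determined (up to the choice of the arcs on these circles,
   which plays no role for the reciprocity relation below) by the vertices
   and Ps. *)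
Definition config46 (R : rcfType) (P1 P2 P3 P4 : R[i]) (Ps : sphere R) : Prop :=
  [/\ uniq [:: P1; P2; P3; P4],
      Ps != Some P1, Ps != Some P2 & (Ps != Some P3) && (Ps != Some P4)].

(* Reciprocally related (4,6) configurations (P1,P2,P3,P123) with common point
   Ps and (Q23,Q13,Q12,Q) with common point Qs: there are Moebius
   transformations M, M' sending Ps, Qs to oo such that, after a rotation u of
   the first straight-line figure, all corresponding segments are parallel:
   {P1,P2}<->{Q,Q12}, {P2,P3}<->{Q,Q23}, {P3,P1}<->{Q,Q13},
   {P1,P123}<->{Q13,Q12}, {P2,P123}<->{Q12,Q23}, {P3,P123}<->{Q23,Q13}. *)
Definition reciprocal (R : rcfType) (P1 P2 P3 P123 : R[i]) (Ps : sphere R)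
    (Q23 Q13 Q12 Q : R[i]) (Qs : sphere R) : Prop :=
  config46 P1 P2 P3 P123 Ps /\ config46 Q23 Q13 Q12 Q Qs /\
  exists (M M' : mobius R) (u : R[i]),
    [/\ mobius_ok M /\ mobius_ok M', mob_app M Ps = None, mob_app M' Qs = None,
        `|u| = 1 &
    (let f := mob_fin M in let g := mob_fin M' in
    [/\ parallel (u * (f P1 - f P2)) (g Q - g Q12),
        parallel (u * (f P2 - f P3)) (g Q - g Q23),
        parallel (u * (f P3 - f P1)) (g Q - g Q13) /\
        parallel (u * (f P1 - f P123)) (g Q13 - g Q12),
        parallel (u * (f P2 - f P123)) (g Q12 - g Q23) &
        parallel (u * (f P3 - f P123)) (g Q23 - g Q13)])].

Definition sqn (R : rcfType) (z : R[i]) : R := complex.Re z ^+ 2 + complex.Im z ^+ 2.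

(* The point z of the sphere lies on the generalized circle
   A |w|^2 + 2 Re (conj B * w) + D = 0 (A, D real, |B|^2 > A D);
   oo lies on it iff A = 0 (i.e. it is a straight line). *)
Definition on_gcircle (R : rcfType) (A : R) (B : R[i]) (D : R) (z : sphere R) : Prop :=
  match z with
  | Some w => A * sqn w + 2 * complex.Re (conjc B * w) + D = 0
  | None => A = 0
  end.

Definition gcircle_ok (R : rcfType) (A : R) (B : R[i]) (D : R) : Prop :=
  A * D < sqn B.

Definition concyclic (R : rcfType) (s : seq (sphere R)) : Prop :=
  exists A B D, gcircle_ok A B D /\ forall z, z \in s -> on_gcircle A B D z.

Definition coords4 (R : rcfType) (z1 z2 z3 z4 : R[i]) : 'I_8 -> R :=
  fun i => nth 0 [:: complex.Re z1; complex.Im z1; complex.Re z2; complex.Im z2;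
                     complex.Re z3; complex.Im z3; complex.Re z4; complex.Im z4] i.

(* Moebius maps sending the common points to oo turn two reciprocal (4,6) configurations
   into straight figures whose corresponding sides are parallel after a rotation.  When the
   triangle P1 P2 P3 is not degenerate, these real proportionalities force the cross-ratio of
   the P's to equal that of the Q's; a degenerate triangle would put the five points of the
   first configuration on one generalized circle.  Equality of cross-ratios is Moebius
   invariant, so it holds for the original points, and together with the six dilation relations
   it determines a1, b2, c3.
   Conversely the six relations have a unique solution, and Maxwell's reciprocal of the
   triangle P1 P2 P3 with the point P123 (sides scaled by products of barycentric coordinates)
   has the cross-ratio of the Q's, so the Moebius map through three of its vertices carries the
   Q's onto it.  Genericity is the non-vanishing of the four triangle areas involved, a product
   which is a nonzero polynomial in the coordinates. *)

From HB Require Import structures.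
From mathcomp Require Import all_boot all_order all_algebra.
From mathcomp Require Import complex.
From mathcomp Require Import mpoly.
From mathcomp Require Import ring.
Set Implicit Arguments.
Unset Strict Implicit.
Unset Printing Implicit Defensive.
Import Order.TTheory GRing.Theory Num.Theory.
Local Open Scope ring_scope.
Local Open Scope complex_scope.

Ltac case_complex := repeat match goal with z : complex _ |- _ => destruct z end.

Lemma uniq4E (T : eqType) (x1 x2 x3 x4 : T) : uniq [:: x1; x2; x3; x4] =
  [&& x1 != x2, x1 != x3, x1 != x4, x2 != x3, x2 != x4 & x3 != x4].
Proof. by rewrite /= !inE !negb_or !andbT -!andbA. Qed.

Section Plane.
Variable R : rcfType.
Implicit Types (x y z w : R[i]) (r s : R).

Lemma complex_ext x y :
  complex.Re x = complex.Re y -> complex.Im x = complex.Im y -> x = y.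
Proof. by case: x => ? ?; case: y => ? ? /= -> ->. Qed.

Definition cross x y : R := complex.Im (x * conjc y).

Lemma crossxx x : cross x x = 0.
Proof. by case_complex; rewrite /cross /=; ring. Qed.

Lemma crossNC x y : cross y x = - cross x y.
Proof. by case_complex; rewrite /cross /=; ring. Qed.

Lemma crossDl x y z : cross (x + y) z = cross x z + cross y z.
Proof. by case_complex; rewrite /cross /=; ring. Qed.

Lemma crossZl r x y : cross (r%:C * x) y = r * cross x y.
Proof. by case_complex; rewrite /cross /=; ring. Qed.

Lemma cross0r x : cross x 0 = 0.
Proof. by rewrite /cross conjc0 mulr0. Qed.

Lemma cross0l x : cross 0 x = 0.
Proof. by rewrite /cross mul0r. Qed.

Lemma parallel_scale r x : parallel x (r%:C * x).
Proof. by rewrite /parallel -/(cross _ _) crossNC crossZl crossxx mulr0 oppr0. Qed.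

Lemma sqn_gt0 z : z != 0 -> 0 < sqn z.
Proof.
case: z => a b nz; rewrite /sqn /= lt_def addr_ge0 ?sqr_ge0 // andbT.
by apply: contra nz; rewrite paddr_eq0 ?sqr_ge0 // !sqrf_eq0 => /andP[/eqP-> /eqP->].
Qed.

Lemma mul_conjc z : z * conjc z = (sqn z)%:C.
Proof. by case_complex; apply: complex_ext; rewrite /sqn /=; ring. Qed.

Lemma parallel_multiple w y : w != 0 -> parallel w y -> exists r, y = r%:C * w.
Proof.
move=> w0 h; exists (complex.Re (y * conjc w) / sqn w).
have n0 : sqn w != 0 by rewrite gt_eqF ?sqn_gt0.
have e : y * conjc w = (complex.Re (y * conjc w))%:C.
  by apply: complex_ext => //; rewrite -/(cross y w) crossNC (h : cross w y = 0) oppr0.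
have cw0 : conjc w != 0 by rewrite conjc_eq0.
apply: (mulIf cw0).
by rewrite e -mulrA mul_conjc -rmorphM divfK.
Qed.

Lemma cross_indep x y r s :
  r%:C * x + s%:C * y = 0 -> cross x y != 0 -> r = 0 /\ s = 0.
Proof.
move=> e nxy.
have /eqP : cross (r%:C * x + s%:C * y) y = 0 by rewrite e cross0l.
have /eqP : cross (r%:C * x + s%:C * y) x = 0 by rewrite e cross0l.
rewrite !crossDl !crossZl !crossxx crossNC !mulr0 addr0 add0r mulrN oppr_eq0.
by rewrite !mulf_eq0 (negbTE nxy) !orbF => /eqP-> /eqP->.
Qed.

Definition area3 (p1 p2 p3 : R[i]) : R := cross (p1 - p3) (p2 - p3).

Lemma area3_barycentric (p1 p2 p3 p4 : R[i]) :
  (area3 p1 p2 p3)%:C * p4 =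
  (area3 p4 p2 p3)%:C * p1 + (area3 p1 p4 p3)%:C * p2 + (area3 p1 p2 p4)%:C * p3.
Proof. by rewrite /area3 /cross; case_complex; apply: complex_ext => /=; ring. Qed.

Lemma area3_sum (p1 p2 p3 p4 : R[i]) :
  area3 p4 p2 p3 + area3 p1 p4 p3 + area3 p1 p2 p4 = area3 p1 p2 p3.
Proof. by rewrite /area3 /cross; case_complex => /=; ring. Qed.

End Plane.

Section Mobius.
Variable R : rcfType.
Implicit Types (M : mobius R) (x y z w : R[i]).

Definition mob_det M := mob_a M * mob_d M - mob_b M * mob_c M.
Definition mob_den M z := mob_c M * z + mob_d M.

Definition mob_pole M : sphere R :=
  if mob_c M == 0 then None else Some (- mob_d M / mob_c M).

Lemma mob_finE M z :
  mob_den M z != 0 -> mob_fin M z = (mob_a M * z + mob_b M) / mob_den M z.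
Proof. by rewrite /mob_fin /mob_app /mob_den => /negbTE ->. Qed.

Lemma mob_finW M z w :
  mob_den M z != 0 -> mob_a M * z + mob_b M = w * mob_den M z -> mob_fin M z = w.
Proof. by move=> nz e; rewrite mob_finE // e mulfK. Qed.

Lemma mob_fin_id z : mob_fin (Mobius 1 0 0 1) z = z.
Proof. by rewrite /mob_fin /mob_app /= mul0r add0r oner_eq0 mul1r addr0 divr1. Qed.

Lemma mob_den_neq0 M Ps z :
  mobius_ok M -> mob_app M Ps = None -> Ps != Some z -> mob_den M z != 0.
Proof.
rewrite /mobius_ok /mob_den => ok; case: Ps => [w|] /=; last first.
  case: eqP => // c0 _ _; rewrite c0 mul0r add0r; apply: contraNneq ok => d0.
  by rewrite c0 d0 !mulr0 subrr.
case: eqP => // hw _ nwz; apply/eqP => hz.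
have : mob_c M * (w - z) = (mob_c M * w + mob_d M) - (mob_c M * z + mob_d M) by ring.
rewrite hw hz subrr => /eqP; rewrite mulf_eq0 subr_eq0 => /orP[/eqP c0|/eqP wz].
  by move: hw ok; rewrite c0 mul0r add0r => ->; rewrite !mulr0 subrr eqxx.
by rewrite wz eqxx in nwz.
Qed.

Lemma mob_app_pole M : mob_app M (mob_pole M) = None.
Proof.
rewrite /mob_pole; have [c0|c0] := eqVneq (mob_c M) 0; first by rewrite /= c0 eqxx.
by rewrite /= mulrC divfK // addNr eqxx.
Qed.

Lemma mob_pole_neq M z : mob_den M z != 0 -> mob_pole M != Some z.
Proof.
rewrite /mob_pole; have [//|c0] := eqVneq (mob_c M) 0.
by apply: contraNneq => -[<-]; rewrite /mob_den mulrC divfK // addNr.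
Qed.

Lemma mob_finB M x y : mob_den M x != 0 -> mob_den M y != 0 ->
  mob_fin M x - mob_fin M y = mob_det M * (x - y) / (mob_den M x * mob_den M y).
Proof.
move=> hx hy; rewrite !mob_finE //; move: hx hy; rewrite /mob_den /mob_det => hx hy.
by field; rewrite hx hy.
Qed.

Lemma mob_fin_inj M x y : mobius_ok M -> mob_den M x != 0 -> mob_den M y != 0 ->
  x != y -> mob_fin M x != mob_fin M y.
Proof.
move=> ok hx hy xy; rewrite -subr_eq0 mob_finB // !mulf_neq0 ?invr_neq0 ?mulf_neq0 //.
by rewrite subr_eq0.
Qed.

Definition mob_mul M N : mobius R :=
  Mobius (mob_a M * mob_a N + mob_b M * mob_c N) (mob_a M * mob_b N + mob_b M * mob_d N)
         (mob_c M * mob_a N + mob_d M * mob_c N) (mob_c M * mob_b N + mob_d M * mob_d N).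

Definition mob_adj M : mobius R := Mobius (mob_d M) (- mob_b M) (- mob_c M) (mob_a M).

(* z |-> (z13 - z12) (z - z23) / ((z13 - z23) (z - z12)) sends z23, z13, z12 to 0, 1, oo. *)
Definition mob_std z23 z13 z12 : mobius R :=
  Mobius (z13 - z12) (- z23 * (z13 - z12)) (z13 - z23) (- z12 * (z13 - z23)).

Definition mob3 z23 z13 z12 w23 w13 w12 : mobius R :=
  mob_mul (mob_adj (mob_std w23 w13 w12)) (mob_std z23 z13 z12).

Section ThreePoints.
Variables z23 z13 z12 w23 w13 w12 : R[i].
Hypotheses (z23_13 : z23 != z13) (z23_12 : z23 != z12) (z13_12 : z13 != z12).
Hypotheses (w23_13 : w23 != w13) (w23_12 : w23 != w12) (w13_12 : w13 != w12).
Let N := mob3 z23 z13 z12 w23 w13 w12.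

Lemma mob3_ok : mobius_ok N.
Proof.
rewrite /mobius_ok.
have -> : mob_a N * mob_d N - mob_b N * mob_c N =
  (w13 - w12) * (w13 - w23) * (w23 - w12) * ((z13 - z12) * (z13 - z23) * (z23 - z12)).
  by rewrite /N /mob3 /mob_mul /mob_adj /mob_std /=; ring.
by rewrite !mulf_neq0 // subr_eq0 // eq_sym.
Qed.

Lemma mob3_denE z :
  mob_den N z = (w13 - w12) * (z13 - z23) * (z - z12) - (w13 - w23) * (z13 - z12) * (z - z23).
Proof. by rewrite /N /mob3 /mob_den /mob_mul /mob_adj /mob_std /=; ring. Qed.

Lemma mob3_numE z w : mob_a N * z + mob_b N - w * mob_den N z =
  (w - w12) * (w13 - w23) * ((z13 - z12) * (z - z23)) +
  (w23 - w) * (w13 - w12) * ((z13 - z23) * (z - z12)).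
Proof. by rewrite /N /mob3 /mob_den /mob_mul /mob_adj /mob_std /=; ring. Qed.

Lemma mob3_cross_ratio z w : z != z12 ->
  (w12 - w) * (w13 - w23) * ((z13 - z12) * (z - z23)) =
  (w23 - w) * (w13 - w12) * ((z13 - z23) * (z - z12)) ->
  mob_den N z != 0 /\ mob_fin N z = w.
Proof.
move=> zz12 cr.
have num0 : mob_a N * z + mob_b N - w * mob_den N z = 0.
  by rewrite mob3_numE -cr; ring.
have den0 : mob_den N z != 0.
  apply: contraTneq isT => den0.
  have : (w13 - w12) * (w13 - w23) * (w23 - w12) * ((z13 - z23) * (z - z12)) =
         (w13 - w23) * (mob_a N * z + mob_b N - w * mob_den N z) +
         (w - w12) * (w13 - w23) * mob_den N z.
    by rewrite mob3_numE mob3_denE; ring.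
  rewrite num0 den0 !mulr0 addr0 => /eqP; rewrite !mulf_eq0 !subr_eq0.
  by rewrite (negbTE zz12) (negbTE w13_12) eq_sym (negbTE w23_13) (negbTE w23_12)
     eq_sym (negbTE z23_13).
by split=> //; apply: mob_finW => //; apply/eqP; rewrite -subr_eq0 num0.
Qed.

Lemma mob3_z23 : mob_den N z23 != 0 /\ mob_fin N z23 = w23.
Proof. by apply: mob3_cross_ratio => //; ring. Qed.

Lemma mob3_z13 : mob_den N z13 != 0 /\ mob_fin N z13 = w13.
Proof. by apply: mob3_cross_ratio => //; ring. Qed.

Lemma mob3_z12 : mob_den N z12 != 0 /\ mob_fin N z12 = w12.
Proof.
have den0 : mob_den N z12 != 0.
  by rewrite mob3_denE subrr mulr0 sub0r oppr_eq0 !mulf_neq0 // subr_eq0 // eq_sym.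
split=> //; apply: mob_finW => //; apply/eqP; rewrite -subr_eq0 mob3_numE.
by rewrite !subrr !(mulr0, mul0r, addr0).
Qed.

End ThreePoints.

End Mobius.

Section CrossRatio.
Variable R : rcfType.

(* Vanishes iff the cross-ratios (p2 - p3)(p4 - p1) / ((p3 - p1)(p4 - p2)) and
   (q13 - q12)(q23 - q) / ((q13 - q)(q12 - q23)) agree. *)
Definition cr_defect (p1 p2 p3 p4 q23 q13 q12 q : R[i]) : R[i] :=
  (p2 - p3) * (p4 - p1) * ((q13 - q) * (q12 - q23)) -
  (p3 - p1) * (p4 - p2) * ((q13 - q12) * (q23 - q)).

Lemma cr_defect_mob (M M' : mobius R) p1 p2 p3 p4 q23 q13 q12 q :
  mob_den M p1 != 0 -> mob_den M p2 != 0 -> mob_den M p3 != 0 -> mob_den M p4 != 0 ->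
  mob_den M' q23 != 0 -> mob_den M' q13 != 0 -> mob_den M' q12 != 0 -> mob_den M' q != 0 ->
  cr_defect (mob_fin M p1) (mob_fin M p2) (mob_fin M p3) (mob_fin M p4)
            (mob_fin M' q23) (mob_fin M' q13) (mob_fin M' q12) (mob_fin M' q) =
  mob_det M ^+ 2 * mob_det M' ^+ 2 /
    (mob_den M p1 * mob_den M p2 * mob_den M p3 * mob_den M p4 *
     (mob_den M' q23 * mob_den M' q13 * mob_den M' q12 * mob_den M' q)) *
  cr_defect p1 p2 p3 p4 q23 q13 q12 q.
Proof.
move=> h1 h2 h3 h4 g1 g2 g3 g4; rewrite /cr_defect !mob_finB //.
by field; rewrite h1 h2 h3 h4 g1 g2 g3 g4.
Qed.

End CrossRatio.

Section StraightReciprocal.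
Variable R : rcfType.
Variables u p1 p2 p3 p4 q23 q13 q12 q : R[i].
Hypotheses (u0 : u != 0) (p12 : p1 != p2) (p23 : p2 != p3) (p31 : p3 != p1).
Hypotheses (p14 : p1 != p4) (p24 : p2 != p4).
Hypotheses (par12 : parallel (u * (p1 - p2)) (q - q12))
           (par23 : parallel (u * (p2 - p3)) (q - q23))
           (par31 : parallel (u * (p3 - p1)) (q - q13))
           (par14 : parallel (u * (p1 - p4)) (q13 - q12))
           (par24 : parallel (u * (p2 - p4)) (q12 - q23)).

Lemma straight_reciprocal_coefs : exists t1 t2 t3 s1 s2 : R,
  [/\ q12 = q - t3%:C * (u * (p1 - p2)), q23 = q - t1%:C * (u * (p2 - p3)),
      q13 = q - t2%:C * (u * (p3 - p1)),
      t3%:C * (p1 - p2) - t2%:C * (p3 - p1) = s1%:C * (p1 - p4) &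
      t1%:C * (p2 - p3) - t3%:C * (p1 - p2) = s2%:C * (p2 - p4)].
Proof.
have seg_neq0 x y : x != y -> u * (x - y) != 0 by move=> xy; rewrite mulf_neq0 ?subr_eq0.
have [t3 e12] := parallel_multiple (seg_neq0 _ _ p12) par12.
have [t1 e23] := parallel_multiple (seg_neq0 _ _ p23) par23.
have [t2 e31] := parallel_multiple (seg_neq0 _ _ p31) par31.
have [s1 e14] := parallel_multiple (seg_neq0 _ _ p14) par14.
have [s2 e24] := parallel_multiple (seg_neq0 _ _ p24) par24.
exists t1, t2, t3, s1, s2; split.
- by rewrite -e12; ring.
- by rewrite -e23; ring.
- by rewrite -e31; ring.
- apply: (mulfI u0); transitivity (s1%:C * (u * (p1 - p4))); last by ring.
  rewrite -e14 (_ : q13 - q12 = (q - q12) - (q - q13)); last by ring.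
  by rewrite e12 e31; ring.
- apply: (mulfI u0); transitivity (s2%:C * (u * (p2 - p4))); last by ring.
  rewrite -e24 (_ : q12 - q23 = (q - q23) - (q - q12)); last by ring.
  by rewrite e12 e23; ring.
Qed.

Lemma straight_cr_defect :
  area3 p1 p2 p3 != 0 -> cr_defect p1 p2 p3 p4 q23 q13 q12 q = 0.
Proof.
move=> ncol; have [t1 [t2 [t3 [s1 [s2 [e12 e23 e13 C1 C2]]]]]] := straight_reciprocal_coefs.
(* Eliminating [p4] between [C1] and [C2] gives a real relation between the independent
   vectors [p1 - p3] and [p2 - p3]; its coefficients must vanish. *)
have L0 : (s2 * t3 + s2 * t2 + s1 * t3 - s1 * s2)%:C * (p1 - p3) +
          (- (s2 * t3) - s1 * t1 - s1 * t3 + s1 * s2)%:C * (p2 - p3) = 0.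
  rewrite !(rmorphD, rmorphN, rmorphB, rmorphM) /=.
  transitivity (s2%:C * (t3%:C * (p1 - p2) - t2%:C * (p3 - p1)) -
    s1%:C * (t1%:C * (p2 - p3) - t3%:C * (p1 - p2)) - s1%:C * s2%:C * (p1 - p2)).
    by ring.
  by rewrite C1 C2; ring.
have [l0 m0] := cross_indep L0 ncol.
have st : s2 * t2 = s1 * t1.
  apply/eqP; rewrite -subr_eq0; apply/eqP.
  by rewrite -[RHS](addr0 0) -{1}l0 -m0; ring.
rewrite /cr_defect e12 e23 e13.
transitivity (u ^+ 2 * (p2 - p3) * (p3 - p1) *
  (- t2%:C * (p4 - p1) * (t1%:C * (p2 - p3) - t3%:C * (p1 - p2)) +
   t1%:C * (p4 - p2) * (t3%:C * (p1 - p2) - t2%:C * (p3 - p1)))); first by ring.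
rewrite C1 C2; transitivity (u ^+ 2 * (p2 - p3) * (p3 - p1) * (p4 - p1) * (p4 - p2) *
  ((s2 * t2)%:C - (s1 * t1)%:C)); first by rewrite !rmorphM; ring.
by rewrite st subrr mulr0.
Qed.

Lemma straight_collinear : q13 != q12 -> area3 p1 p2 p3 = 0 -> area3 p4 p1 p3 = 0.
Proof.
move=> q13_12 col; have [t1 [t2 [t3 [s1 [s2 [e12 _ e13 C1 _]]]]]] := straight_reciprocal_coefs.
have s1_neq0 : s1 != 0.
  apply: contraNneq q13_12 => s1_0; rewrite -subr_eq0.
  have -> : q13 - q12 = u * (t3%:C * (p1 - p2) - t2%:C * (p3 - p1)) by rewrite e12 e13; ring.
  by rewrite C1 s1_0 mul0r mulr0.
have e4 : s1%:C * (p4 - p3) = (s1 - t3 - t2)%:C * (p1 - p3) + t3%:C * (p2 - p3).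
  transitivity (s1%:C * (p1 - p3) - s1%:C * (p1 - p4)); first by ring.
  by rewrite -C1 !rmorphB; ring.
apply: (mulfI s1_neq0); rewrite /area3 -crossZl e4.
by rewrite crossDl !crossZl crossxx crossNC (col : cross _ _ = 0) oppr0 !mulr0 addr0.
Qed.

End StraightReciprocal.

Section Circles.
Variable R : rcfType.

Lemma gcircle_of_bilinear (K L g h : R[i]) : K * h - L * g != 0 ->
  exists A B D, [/\ gcircle_ok A B D,
    forall z, complex.Im ((K * z + L) * conjc (g * z + h)) = 0 -> on_gcircle A B D (Some z) &
    g = 0 -> on_gcircle A B D None].
Proof.
move=> KLgh; exists (2 * complex.Im (K * conjc g)),
  (Complex 0 1 * (conjc (K * conjc h) - L * conjc g)), (2 * complex.Im (L * conjc h)); split.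
- rewrite /gcircle_ok -subr_gt0 (_ : _ - _ = sqn (K * h - L * g)) ?sqn_gt0 //.
  by case_complex; rewrite /sqn /=; ring.
- move=> z hz; rewrite /on_gcircle.
  transitivity (2 * complex.Im ((K * z + L) * conjc (g * z + h))); last by rewrite hz mulr0.
  by move: z {hz} => [x y]; case_complex; rewrite /sqn /=; ring.
- by move=> ->; rewrite /on_gcircle conjc0 mulr0 /= mulr0.
Qed.

Lemma mob_collinear_concyclic (M : mobius R) Ps z1 z2 z3 z4 p0 d :
  mobius_ok M -> mob_app M Ps = None -> d != 0 ->
  Ps != Some z1 -> Ps != Some z2 -> Ps != Some z3 -> Ps != Some z4 ->
  cross (mob_fin M z1 - p0) d = 0 -> cross (mob_fin M z2 - p0) d = 0 ->
  cross (mob_fin M z3 - p0) d = 0 -> cross (mob_fin M z4 - p0) d = 0 ->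
  concyclic [:: Some z1; Some z2; Some z3; Some z4; Ps].
Proof.
move=> ok pole d0 n1 n2 n3 n4 h1 h2 h3 h4.
set K := conjc d * (mob_a M - p0 * mob_c M); set L := conjc d * (mob_b M - p0 * mob_d M).
have KL : K * mob_d M - L * mob_c M != 0.
  rewrite (_ : _ - _ = conjc d * mob_det M); last by rewrite /K /L /mob_det; ring.
  by rewrite mulf_neq0 ?conjc_eq0.
have [A [B [D [okC onC onCoo]]]] := gcircle_of_bilinear KL.
have on_image z : Ps != Some z -> cross (mob_fin M z - p0) d = 0 -> on_gcircle A B D (Some z).
  move=> nz hz; have den := mob_den_neq0 ok pole nz; apply: onC.
  have -> : (K * z + L) * conjc (mob_c M * z + mob_d M) =
            ((mob_fin M z - p0) * conjc d) * (mob_den M z * conjc (mob_den M z)).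
    by rewrite mob_finE // /K /L; move: den; rewrite /mob_den => den; field.
  by rewrite mul_conjc mulrC mulrA -/(cross _ _) crossZl hz mulr0.
exists A, B, D; split=> // t; rewrite !inE.
case/orP=> [|/orP[|/orP[|/orP[]]]] /eqP ->; try exact: on_image.
move: pole; case: Ps {n1 n2 n3 n4 on_image} => [w|] /=; case: eqP => // den0 _; last exact: onCoo.
by apply: onC; rewrite den0 conjc0 mulr0.
Qed.

End Circles.

Section Dilations.
Variable R : rcfType.
Variables P1 P2 P3 P123 Q23 Q13 Q12 Q a b c a1 b2 c3 : R[i].
Hypotheses (hQ12 : Q12 - Q = c * (P1 - P2)) (hQ23 : Q23 - Q = a * (P2 - P3))
           (hQ13 : Q13 - Q = b * (P3 - P1)) (hP3 : P123 - P3 = c3 * (Q13 - Q23))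
           (hP1 : P123 - P1 = a1 * (Q12 - Q13)) (hP2 : P123 - P2 = b2 * (Q23 - Q12)).

Lemma cr_defect_dilations : cr_defect P1 P2 P3 P123 Q23 Q13 Q12 Q =
  (P2 - P3) * (P3 - P1) * (Q12 - Q13) * (Q12 - Q23) * (a1 * b - b2 * a).
Proof. by rewrite /cr_defect hP1 hP2 hQ13 hQ23; ring. Qed.

Lemma dilations_of_compatibility : P1 != P2 -> Q13 != Q23 -> a != 0 -> a1 * b = b2 * a ->
  [/\ a1 = - (a / (a * b + b * c + c * a)),
      b2 = - (b / (a * b + b * c + c * a)) &
      c3 = - (c / (a * b + b * c + c * a))].
Proof.
move=> P12 Q13_23 a0 hab; set S := a * b + b * c + c * a.
have hS : (a1 * S + a) * (P1 - P2) = 0.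
  transitivity (- a * (P123 - P1 - a1 * (Q12 - Q13)) + a * (P123 - P2 - b2 * (Q23 - Q12))
    - a1 * a * ((Q12 - Q - c * (P1 - P2)) - (Q13 - Q - b * (P3 - P1)))
    + a1 * b * ((Q23 - Q - a * (P2 - P3)) - (Q12 - Q - c * (P1 - P2)))
    + (b2 * a - a1 * b) * (Q23 - Q12)); first by rewrite /S; ring.
  by rewrite hP1 hP2 hQ12 hQ13 hQ23 hab !subrr; ring.
move/eqP: hS; rewrite mulf_eq0 subr_eq0 (negbTE P12) orbF addr_eq0 => /eqP a1S.
have S0 : S != 0 by apply: contraNneq a0 => S0; rewrite -oppr_eq0 -a1S S0 mulr0.
have hc : (c3 * S + c) * (Q13 - Q23) = 0.
  transitivity (- S * (P123 - P3 - c3 * (Q13 - Q23)) + S * (P123 - P1 - a1 * (Q12 - Q13))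
    + (a1 * S + a) * (Q12 - Q13)
    - a * ((Q12 - Q - c * (P1 - P2)) - (Q13 - Q - b * (P3 - P1)))
    + c * ((Q13 - Q - b * (P3 - P1)) - (Q23 - Q - a * (P2 - P3)))); first by rewrite /S; ring.
  by rewrite hP3 hP1 a1S hQ12 hQ13 hQ23 addNr !subrr; ring.
move/eqP: hc; rewrite mulf_eq0 subr_eq0 (negbTE Q13_23) orbF addr_eq0 => /eqP c3S.
have ea1 : a1 = - (a / S) by rewrite -mulNr -a1S mulfK.
split=> //; last by rewrite -mulNr -c3S mulfK.
by apply/(mulIf a0); rewrite -hab ea1; ring.
Qed.

Lemma dilations_of_cr_defect :
  uniq [:: P1; P2; P3; P123] -> uniq [:: Q23; Q13; Q12; Q] ->
  cr_defect P1 P2 P3 P123 Q23 Q13 Q12 Q = 0 ->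
  [/\ a1 = - (a / (a * b + b * c + c * a)),
      b2 = - (b / (a * b + b * c + c * a)) &
      c3 = - (c / (a * b + b * c + c * a))].
Proof.
rewrite !uniq4E => /and5P[P12 P13 _ P23 _] /and5P[Q23_13 Q23_12 Q23_Q Q13_12 _].
have a0 : a != 0 by apply: contraNneq Q23_Q => a0; apply/eqP/subr0_eq; rewrite hQ23 a0 mul0r.
rewrite cr_defect_dilations => /eqP; rewrite !mulf_eq0 !subr_eq0 (negbTE P23) eq_sym.
rewrite (negbTE P13) eq_sym (negbTE Q13_12) eq_sym (negbTE Q23_12) /= => /eqP hab.
by apply: dilations_of_compatibility; rewrite // eq_sym.
Qed.

End Dilations.

Lemma reciprocal_cr_defect (R : rcfType) (P1 P2 P3 P123 Q23 Q13 Q12 Q : R[i]) (Ps Qs : sphere R) :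
  reciprocal P1 P2 P3 P123 Ps Q23 Q13 Q12 Q Qs ->
  ~ concyclic [:: Some P1; Some P2; Some P3; Some P123; Ps] ->
  cr_defect P1 P2 P3 P123 Q23 Q13 Q12 Q = 0.
Proof.
move=> [[uP sP1 sP2 /andP[sP3 sP4]] [[uQ sQ1 sQ2 /andP[sQ3 sQ4]]]].
move=> [M [M' [u [[okM okM'] pM pM' u1 /= [par12 par23 [par31 par14] par24 _]]]]] nconc.
move: uP uQ; rewrite !uniq4E => /and5P[P12 P13 P14 P23 /andP[P24 _]] /and5P[_ _ _ Q13_12 _].
have u0 : u != 0 by rewrite -normr_eq0 u1 oner_eq0.
have dP z : Ps != Some z -> mob_den M z != 0 := mob_den_neq0 okM pM.
have dQ z : Qs != Some z -> mob_den M' z != 0 := mob_den_neq0 okM' pM'.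
have inj x y : Ps != Some x -> Ps != Some y -> x != y -> mob_fin M x != mob_fin M y.
  by move=> sx sy; apply: mob_fin_inj okM (dP _ sx) (dP _ sy).
have p12 := inj _ _ sP1 sP2 P12; have p23 := inj _ _ sP2 sP3 P23.
have p31 : mob_fin M P3 != mob_fin M P1 by apply: inj; rewrite // eq_sym.
have p14 := inj _ _ sP1 sP4 P14; have p24 := inj _ _ sP2 sP4 P24.
have [col|ncol] := eqVneq (area3 (mob_fin M P1) (mob_fin M P2) (mob_fin M P3)) 0.
  have q13_12 : mob_fin M' Q13 != mob_fin M' Q12.
    exact: mob_fin_inj okM' (dQ _ sQ2) (dQ _ sQ3) Q13_12.
  have col4 := straight_collinear u0 p12 p23 p31 p14 p24 par12 par23 par31 par14 par24 q13_12 col.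
  case: nconc; apply: (mob_collinear_concyclic okM pM _ sP1 sP2 sP3 sP4 _ _ _ col4).
  - by rewrite subr_eq0 eq_sym.
  - exact: crossxx.
  - by rewrite crossNC (col : cross _ _ = 0) oppr0.
  - by rewrite subrr cross0l.
have := straight_cr_defect u0 p12 p23 p31 p14 p24 par12 par23 par31 par14 par24 ncol.
rewrite cr_defect_mob ?dP ?dQ // => /eqP; rewrite mulf_eq0 (negbTE (_ : _ != 0)) => [/eqP //|].
by rewrite !mulf_neq0 ?expf_neq0 ?invr_neq0 ?mulf_neq0 ?dP ?dQ.
Qed.



Lemma reciprocal_of_barycentric (T : comRingType) (p1 p2 p3 p4 g1 g2 g3 : T) :
  (g1 + g2 + g3) * p4 = g1 * p1 + g2 * p2 + g3 * p3 ->
  let q12 := g1 * g2 * (p1 - p2) in let q23 := g2 * g3 * (p2 - p3) in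
  let q13 := g3 * g1 * (p3 - p1) in
  [/\ q13 - q12 = g1 * (g1 + g2 + g3) * (p4 - p1),
      q12 - q23 = g2 * (g1 + g2 + g3) * (p4 - p2) &
      q23 - q13 = g3 * (g1 + g2 + g3) * (p4 - p3)].
Proof.
move=> bary q12 q23 q13; split.
- transitivity (g1 * ((g1 + g2 + g3) * p4) - g1 * (g1 + g2 + g3) * p1); last by ring.
  by rewrite bary /q13 /q12; ring.
- transitivity (g2 * ((g1 + g2 + g3) * p4) - g2 * (g1 + g2 + g3) * p2); last by ring.
  by rewrite bary /q12 /q23; ring.
- transitivity (g3 * ((g1 + g2 + g3) * p4) - g3 * (g1 + g2 + g3) * p3); last by ring.
  by rewrite bary /q23 /q13; ring.
Qed.

Section Construction.
Variable R : rcfType.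

Definition phi123 (a b c P1 P2 P3 : R[i]) : R[i] :=
  (b * c * P1 + c * a * P2 + a * b * P3) / (a * b + b * c + c * a).

Variables a b c P1 P2 P3 Q : R[i].
Hypothesis S0 : a * b + b * c + c * a != 0.
Let S := a * b + b * c + c * a.
Let P123 := phi123 a b c P1 P2 P3.
Let Q12 := Q + c * (P1 - P2).
Let Q23 := Q + a * (P2 - P3).
Let Q13 := Q + b * (P3 - P1).

Lemma phi123_dilations :
  [/\ Q12 - Q = c * (P1 - P2), Q23 - Q = a * (P2 - P3),
      Q13 - Q = b * (P3 - P1) /\ P123 - P3 = - (c / S) * (Q13 - Q23),
      P123 - P1 = - (a / S) * (Q12 - Q13) & P123 - P2 = - (b / S) * (Q23 - Q12)].
Proof.
rewrite /P123 /phi123 /Q12 /Q23 /Q13 /S.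
by split; [ring | ring | split; [ring | field] | field | field].
Qed.

Lemma dilations_unique Q12' Q23' Q13' P123' :
  Q12' - Q = c * (P1 - P2) -> Q23' - Q = a * (P2 - P3) -> Q13' - Q = b * (P3 - P1) ->
  P123' - P1 = - (a / S) * (Q12' - Q13') ->
  [/\ Q12' = Q12, Q23' = Q23, Q13' = Q13 & P123' = P123].
Proof.
move=> h12 h23 h13 h1.
have e12 : Q12' = Q12 by rewrite /Q12 -h12; ring.
have e13 : Q13' = Q13 by rewrite /Q13 -h13; ring.
split=> //; first by rewrite /Q23 -h23; ring.
have -> : P123' = P1 + (P123' - P1) by ring.
by rewrite h1 e12 e13; case: phi123_dilations => _ _ _ <- _; ring.
Qed.

Hypotheses (a0 : a != 0) (b0 : b != 0) (c0 : c != 0).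
Let D := area3 P1 P2 P3.
Let g1 := area3 P123 P2 P3.
Let g2 := area3 P1 P123 P3.
Let g3 := area3 P1 P2 P123.
Hypotheses (D0 : D != 0) (g1_0 : g1 != 0) (g2_0 : g2 != 0) (g3_0 : g3 != 0).

Lemma phi123_uniq : uniq [:: P1; P2; P3; P123].
Proof.
rewrite uniq4E; apply/and5P; split; [| | | | apply/andP; split].
- by apply: contraNneq D0 => e; rewrite /D /area3 e crossxx.
- by apply: contraNneq D0 => e; rewrite /D /area3 e subrr cross0l.
- by apply: contraNneq g2_0 => e; rewrite /g2 /area3 e crossxx.
- by apply: contraNneq D0 => e; rewrite /D /area3 e subrr cross0r.
- by apply: contraNneq g1_0 => e; rewrite /g1 /area3 e crossxx.
- by apply: contraNneq g1_0 => e; rewrite /g1 /area3 e subrr cross0l.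
Qed.

Lemma dilations_uniq : uniq [:: Q23; Q13; Q12; Q].
Proof.
move: phi123_uniq; rewrite !uniq4E => /and5P[P12 P13 P14 P23 /andP[P24 P34]].
have [hQ12 hQ23 [hQ13 hP3] hP1 hP2] := phi123_dilations.
apply/and5P; split; [| | | | apply/andP; split]; rewrite -subr_eq0.
- by apply: contraNneq P34 => /subr0_eq e; rewrite eq_sym -subr_eq0 hP3 e subrr mulr0.
- by apply: contraNneq P24 => /subr0_eq e; rewrite eq_sym -subr_eq0 hP2 e subrr mulr0.
- by rewrite hQ23 mulf_neq0 ?subr_eq0.
- by apply: contraNneq P14 => /subr0_eq e; rewrite eq_sym -subr_eq0 hP1 e subrr mulr0.
- by rewrite hQ13 mulf_neq0 ?subr_eq0 // eq_sym.
- by rewrite hQ12 mulf_neq0 ?subr_eq0.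
Qed.

(* Maxwell's reciprocal figure of the triangle P1 P2 P3 with the point P123. *)
Let q12 := (g1 * g2)%:C * (P1 - P2).
Let q23 := (g2 * g3)%:C * (P2 - P3).
Let q13 := (g3 * g1)%:C * (P3 - P1).

Lemma dual_figure : [/\ q13 - q12 = (g1 * D)%:C * (P123 - P1),
  q12 - q23 = (g2 * D)%:C * (P123 - P2) & q23 - q13 = (g3 * D)%:C * (P123 - P3)].
Proof.
have bary : (g1%:C + g2%:C + g3%:C) * P123 = g1%:C * P1 + g2%:C * P2 + g3%:C * P3.
  by rewrite -!rmorphD area3_sum area3_barycentric.
by have := reciprocal_of_barycentric bary; rewrite /= -!rmorphD -!rmorphM area3_sum.
Qed.

Lemma dual_neq : [/\ q23 != q13, q23 != q12 & q13 != q12].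
Proof.
move: phi123_uniq; rewrite uniq4E => /and5P[_ _ P14 _ /andP[P24 P34]].
have [e1 e2 e3] := dual_figure.
split; [rewrite -subr_eq0 e3 | rewrite eq_sym -subr_eq0 e2 | rewrite -subr_eq0 e1].
all: by rewrite !mulf_neq0 ?fmorph_eq0 ?mulf_neq0 // subr_eq0 eq_sym.
Qed.

Lemma dual_cross_ratio : (q12 - 0) * (q13 - q23) * ((Q13 - Q12) * (Q - Q23)) =
  (q23 - 0) * (q13 - q12) * ((Q13 - Q23) * (Q - Q12)).
Proof.
have [e1 _ e3] := dual_figure.
rewrite !subr0 e1 -[q13 - q23]opprB e3 /q12 /q23 /P123 /phi123 /Q12 /Q23 /Q13.
by rewrite !rmorphM; field.
Qed.

Lemma reciprocal_phi123 : exists Ps Qs : sphere R,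
  reciprocal P1 P2 P3 P123 Ps Q23 Q13 Q12 Q Qs.
Proof.
have uP := phi123_uniq; have uQ := dilations_uniq.
move: (uQ); rewrite uniq4E => /and5P[Q23_13 Q23_12 _ Q13_12 /andP[_ Q12_Q]].
have [q23_13 q23_12 q13_12] := dual_neq.
pose N := mob3 Q23 Q13 Q12 q23 q13 q12.
have [dQ23 fQ23] : mob_den N Q23 != 0 /\ mob_fin N Q23 = q23 by apply: mob3_z23.
have [dQ13 fQ13] : mob_den N Q13 != 0 /\ mob_fin N Q13 = q13 by apply: mob3_z13.
have [dQ12 fQ12] : mob_den N Q12 != 0 /\ mob_fin N Q12 = q12 by apply: mob3_z12.
have [dQ fQ] : mob_den N Q != 0 /\ mob_fin N Q = 0.
  by apply: mob3_cross_ratio; rewrite // ?dual_cross_ratio // eq_sym.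
have [e1 e2 e3] := dual_figure.
exists None, (mob_pole N); split; last split.
- by split.
- by split; rewrite ?mob_pole_neq.
exists (Mobius 1 0 0 1), N, 1; split.
- by split; [rewrite /mobius_ok /= mulr1 mulr0 subr0 oner_eq0 | exact: mob3_ok].
- by rewrite /= eqxx.
- exact: mob_app_pole.
- exact: normr1.
rewrite /= !mob_fin_id fQ23 fQ13 fQ12 fQ !mul1r !sub0r e1 e2 e3 /q12 /q23 /q13.
rewrite -[P123 - P1]opprB -[P123 - P2]opprB -[P123 - P3]opprB !mulrN -!mulNr -!rmorphN.
by split; [| | split | |]; exact: parallel_scale.
Qed.

End Construction.

Section GenericityPolynomial.
Variable R : rcfType.
Local Notation P := {mpoly R[8]}.

(* A complex-valued polynomial in the eight real coordinates, as its real and imaginary parts. *)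
Definition cpoly := (P * P)%type.

Definition cpoly_eval (p : cpoly) (v : 'I_8 -> R) : R[i] := Complex p.1.@[v] p.2.@[v].
Definition cpoly_add (p q : cpoly) : cpoly := (p.1 + q.1, p.2 + q.2).
Definition cpoly_sub (p q : cpoly) : cpoly := (p.1 - q.1, p.2 - q.2).
Definition cpoly_scale (k : R[i]) (p : cpoly) : cpoly :=
  ((complex.Re k)%:MP * p.1 - (complex.Im k)%:MP * p.2,
   (complex.Re k)%:MP * p.2 + (complex.Im k)%:MP * p.1).
Definition cpoly_area3 (p q r : cpoly) : P :=
  let x := cpoly_sub p r in let y := cpoly_sub q r in x.2 * y.1 - x.1 * y.2.

Lemma cpoly_evalD p q v : cpoly_eval (cpoly_add p q) v = cpoly_eval p v + cpoly_eval q v.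
Proof. by rewrite /cpoly_eval /= !mevalD. Qed.

Lemma cpoly_evalZ k p v : cpoly_eval (cpoly_scale k p) v = k * cpoly_eval p v.
Proof.
by rewrite /cpoly_eval /= !(mevalB, mevalD, mevalM, mevalC); case: k => ? ?; apply: complex_ext.
Qed.

Lemma meval_cpoly_area3 p q r v :
  (cpoly_area3 p q r).@[v] = area3 (cpoly_eval p v) (cpoly_eval q v) (cpoly_eval r v).
Proof. by rewrite /cpoly_area3 /area3 /cross /cpoly_eval /= !(mevalB, mevalM); ring. Qed.

Definition point_var (i j : 'I_8) : cpoly := ('X_i, 'X_j).

Lemma cpoly_eval_var i j v : cpoly_eval (point_var i j) v = Complex (v i) (v j).
Proof. by rewrite /cpoly_eval /= !mevalXU. Qed.

Definition var1 := point_var (@Ordinal 8 0 isT) (@Ordinal 8 1 isT).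
Definition var2 := point_var (@Ordinal 8 2 isT) (@Ordinal 8 3 isT).
Definition var3 := point_var (@Ordinal 8 4 isT) (@Ordinal 8 5 isT).

Lemma cpoly_eval_coords4 (z1 z2 z3 z4 : R[i]) :
  [/\ cpoly_eval var1 (coords4 z1 z2 z3 z4) = z1, cpoly_eval var2 (coords4 z1 z2 z3 z4) = z2 &
      cpoly_eval var3 (coords4 z1 z2 z3 z4) = z3].
Proof. by rewrite !cpoly_eval_var /coords4 /=; split; [case: z1 | case: z2 | case: z3]. Qed.

Definition phi123_cpoly (a b c : R[i]) : cpoly :=
  let S := a * b + b * c + c * a in
  cpoly_add (cpoly_add (cpoly_scale (b * c / S) var1) (cpoly_scale (c * a / S) var2))
            (cpoly_scale (a * b / S) var3).

Lemma cpoly_eval_phi123 a b c z1 z2 z3 z4 :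
  cpoly_eval (phi123_cpoly a b c) (coords4 z1 z2 z3 z4) = phi123 a b c z1 z2 z3.
Proof.
have [e1 e2 e3] := cpoly_eval_coords4 z1 z2 z3 z4.
by rewrite !cpoly_evalD !cpoly_evalZ e1 e2 e3 /phi123 !mulrDl; ring.
Qed.

Definition generic_poly (a b c : R[i]) : P :=
  let v4 := phi123_cpoly a b c in
  cpoly_area3 var1 var2 var3 * cpoly_area3 v4 var2 var3 *
  cpoly_area3 var1 v4 var3 * cpoly_area3 var1 var2 v4.

Lemma meval_generic_poly a b c P1 P2 P3 Q :
  let P123 := phi123 a b c P1 P2 P3 in
  (generic_poly a b c).@[coords4 P1 P2 P3 Q] =
  area3 P1 P2 P3 * area3 P123 P2 P3 * area3 P1 P123 P3 * area3 P1 P2 P123.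
Proof.
have [e1 e2 e3] := cpoly_eval_coords4 P1 P2 P3 Q.
by rewrite /generic_poly !mevalM !meval_cpoly_area3 cpoly_eval_phi123 e1 e2 e3.
Qed.

Lemma Im_affine_neq0 (k w : R[i]) : k != 0 -> exists z, complex.Im (k * z + w) != 0.
Proof.
move=> k0; have [w0|w0] := eqVneq (complex.Im w) 0; last by exists 0; rewrite mulr0 add0r.
exists (Complex 0 1 * conjc k).
have -> : complex.Im (k * (Complex 0 1 * conjc k) + w) = sqn k + complex.Im w.
  by case_complex; rewrite /sqn /=; ring.
by rewrite w0 addr0 lt0r_neq0 ?sqn_gt0.
Qed.

Lemma area3_Im (z : R[i]) :
  [/\ area3 z 1 0 = complex.Im z, area3 1 z 0 = - complex.Im z & area3 0 1 z = - complex.Im z].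
Proof. by rewrite /area3 /cross; case_complex; split => /=; ring. Qed.

Lemma generic_poly_neq0 a b c : a != 0 -> b != 0 -> c != 0 ->
  a * b + b * c + c * a != 0 -> generic_poly a b c != 0.
Proof.
move=> a0 b0 c0 S0; set S := a * b + b * c + c * a.
have nz (p : P) v : p.@[v] != 0 -> p != 0 by move=> pv; apply: contraNneq pv => ->; rewrite meval0.
have k0 x y : x != 0 -> y != 0 -> x * y / S != 0 by move=> x0 y0; rewrite !mulf_neq0 ?invr_neq0.
rewrite /generic_poly; apply: mulf_neq0; [apply: mulf_neq0; [apply: mulf_neq0|]|].
- apply: (nz _ (coords4 (Complex 0 1) 1 0 0)).
  have [e1 e2 e3] := cpoly_eval_coords4 (Complex 0 1) 1 0 0.
  rewrite meval_cpoly_area3 e1 e2 e3; case: (area3_Im (Complex 0 1)) => -> _ _.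
  exact: oner_neq0.
- have [z hz] := Im_affine_neq0 (c * a / S) (k0 _ _ b0 c0).
  apply: (nz _ (coords4 z 1 0 0)); have [_ e2 e3] := cpoly_eval_coords4 z 1 0 0.
  rewrite meval_cpoly_area3 cpoly_eval_phi123 e2 e3.
  case: (area3_Im (phi123 a b c z 1 0)) => -> _ _.
  by rewrite (_ : phi123 _ _ _ _ _ _ = b * c / S * z + c * a / S) // /phi123; ring.
- have [z hz] := Im_affine_neq0 (b * c / S) (k0 _ _ c0 a0).
  apply: (nz _ (coords4 1 z 0 0)); have [e1 _ e3] := cpoly_eval_coords4 1 z 0 0.
  rewrite meval_cpoly_area3 cpoly_eval_phi123 e1 e3.
  case: (area3_Im (phi123 a b c 1 z 0)) => _ -> _.
  by rewrite oppr_eq0 (_ : phi123 _ _ _ _ _ _ = c * a / S * z + b * c / S) // /phi123; ring.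
- have [z hz] := Im_affine_neq0 (c * a / S) (k0 _ _ a0 b0).
  apply: (nz _ (coords4 0 1 z 0)); have [e1 e2 _] := cpoly_eval_coords4 0 1 z 0.
  rewrite meval_cpoly_area3 cpoly_eval_phi123 e1 e2.
  case: (area3_Im (phi123 a b c 0 1 z)) => _ _ ->.
  by rewrite oppr_eq0 (_ : phi123 _ _ _ _ _ _ = a * b / S * z + c * a / S) // /phi123; ring.
Qed.

End GenericityPolynomial.

Local Close Scope complex_scope.

Theorem theorem3 (R : rcfType) :
  (* (i) *)
  (forall (P1 P2 P3 P123 Q23 Q13 Q12 Q : R[i]) (Ps Qs : sphere R),
     reciprocal P1 P2 P3 P123 Ps Q23 Q13 Q12 Q Qs ->
     ~ concyclic [:: Some P1; Some P2; Some P3; Some P123; Ps] ->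
     forall a b c a1 b2 c3 : R[i],
       Q12 - Q = c * (P1 - P2) ->
       Q23 - Q = a * (P2 - P3) ->
       Q13 - Q = b * (P3 - P1) ->
       P123 - P3 = c3 * (Q13 - Q23) ->
       P123 - P1 = a1 * (Q12 - Q13) ->
       P123 - P2 = b2 * (Q23 - Q12) ->
       [/\ a1 = - (a / (a * b + b * c + c * a)),
           b2 = - (b / (a * b + b * c + c * a)) &
           c3 = - (c / (a * b + b * c + c * a))]) /\
  (* (ii) *)
  (forall a b c : R[i], a != 0 -> b != 0 -> c != 0 ->
     a * b + b * c + c * a != 0 ->
     let a1 := - (a / (a * b + b * c + c * a)) in
     let b2 := - (b / (a * b + b * c + c * a)) in
     let c3 := - (c / (a * b + b * c + c * a)) in
     let eqs P1 P2 P3 Q (Q12 Q23 Q13 P123 : R[i]) :=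
       [/\ Q12 - Q = c * (P1 - P2), Q23 - Q = a * (P2 - P3),
           Q13 - Q = b * (P3 - P1) /\ P123 - P3 = c3 * (Q13 - Q23),
           P123 - P1 = a1 * (Q12 - Q13) & P123 - P2 = b2 * (Q23 - Q12)] in
     exists p : {mpoly R[8]}, p != 0 /\
     forall P1 P2 P3 Q : R[i], p.@[coords4 P1 P2 P3 Q] != 0 ->
       exists Q12 Q23 Q13 P123 : R[i],
         [/\ eqs P1 P2 P3 Q Q12 Q23 Q13 P123,
             (forall Q12' Q23' Q13' P123' : R[i],
                 eqs P1 P2 P3 Q Q12' Q23' Q13' P123' ->
                 [/\ Q12' = Q12, Q23' = Q23, Q13' = Q13 & P123' = P123]) &
             exists Ps Qs : sphere R,
               reciprocal P1 P2 P3 P123 Ps Q23 Q13 Q12 Q Qs]).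
Proof.
split.
  move=> P1 P2 P3 P123 Q23 Q13 Q12 Q Ps Qs rec nconc a b c a1 b2 c3 hQ12 hQ23 hQ13 hP3 hP1 hP2.
  have [[uP _ _ _] [[uQ _ _ _] _]] := rec.
  exact: dilations_of_cr_defect hQ12 hQ23 hQ13 hP3 hP1 hP2 uP uQ (reciprocal_cr_defect rec nconc).
move=> a b c a0 b0 c0 S0 a1 b2 c3 eqs.
exists (generic_poly a b c); split; first exact: generic_poly_neq0.
move=> P1 P2 P3 Q; rewrite meval_generic_poly !mulf_eq0 !negb_or.
move=> /andP[/andP[/andP[D0 g1_0] g2_0] g3_0].
exists (Q + c * (P1 - P2)), (Q + a * (P2 - P3)), (Q + b * (P3 - P1)), (phi123 a b c P1 P2 P3).
split.
- exact: phi123_dilations.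
- by move=> Q12' Q23' Q13' P123' [h12 h23 [h13 _] h1 _]; apply: dilations_unique.
- exact: reciprocal_phi123.
Qed.
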